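(* Let $X$ be a compact Hausdorff space with a continuous injective right action of $P$ such that $X\rtimes P$ admits a Haar system, and put $X_0:=X\,Int(P)=\{xb:x\in X,\ b\in Int(P)\}$. Let $a\in P$ and let $(U_n)$ be a decreasing sequence of open subsets of $G$ with $\bigcap_n U_n=\{a\}$ such that every open $U\ni a$ contains $U_n$ for all large $n$. For each $n$ choose $f_n\in C_c(G)$ with $f_n\ge 0$, $\int f_n(g)\,dg=1$ and $\mathrm{supp}(f_n)\subset U_n\cap Int(P)a$ (this set is nonempty), and define $F_n\in C(X)$ by $F_n(x)=\int f_n(g)1_{Q_x}(g^{-1})\,dg$. Then $F_n$ converges pointwise on $X$ to the indicator function $1_{X_0a}$ of $X_0a=\{ya:y\in X_0\}$.
   Context: Standing assumptions: $G$ is a second countable locally compact group with left Haar measure $dg$; $P\subset G$ is a closed subsemigroup with identity $e\in P$, such that $G=PP^{-1}$ and the interior $Int(P)$ of $P$ is dense in $P$. Semidirect product groupoid: for a compact Hausdorff space $X$ with a continuous right action of $P$ such that each $x\mapsto xa$ is injective, $X\rtimes P:=\{(x,g)\in X\times G:\exists a,b\in P,\ y\in X \text{ with } g=ab^{-1},\ xa=yb\}$ (the point $y$ is then unique; write $(x,g,y)$), with the subspace topology of $X\times G$, product $(x,g,y)(y,h,z)=(x,gh,z)$ and inverse $(x,g,y)^{-1}=(y,g^{-1},x)$. For $x\in X$, $Q_x:=\{g\in G:(x,g)\in X\rtimes P\}$ and $\lambda^x$ is the measure with $\int\phi\,d\lambda^x=\int\phi(x,g)1_{Q_x}(g)\,dg$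 for $\phi\in C_c(X\rtimes P)$. ''$X\rtimes P$ admits a Haar system'' means $(\lambda^x)_{x\in X}$ is a Haar system, i.e. $x\mapsto\int\phi\,d\lambda^x$ is continuous for all $\phi\in C_c(X\rtimes P)$. *)

From HB Require Import structures.
From mathcomp Require Import all_boot all_order all_algebra.
From mathcomp Require Import all_classical all_reals all_analysis.
Set Implicit Arguments.
Unset Strict Implicit.
Unset Printing Implicit Defensive.
Import Order.TTheory GRing.Theory Num.Theory.
Import numFieldNormedType.Exports.
Local Open Scope classical_set_scope.
Local Open Scope ring_scope.

Definition borel (T : ptopologicalType) := g_sigma_algebraType (@open T).

Record lcsc_group (G : ptopologicalType) (mul : G -> G -> G) (inv : G -> G)
    (e : G) : Prop := LCSCGroup {
  grp_assoc : forall x y z, mul x (mul y z) = mul (mul x y) z;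
  grp_unit : forall x, mul e x = x /\ mul x e = x;
  grp_inv : forall x, mul (inv x) x = e /\ mul x (inv x) = e;
  grp_mul_cont : continuous (fun z : G * G => mul z.1 z.2);
  grp_inv_cont : continuous inv;
  grp_hausdorff : hausdorff_space G;
  grp_loc_compact : locally_compact [set: G];
  grp_second_countable : @second_countable G }.

(* mu is a left Haar measure on the Borel sets of G: left invariant, finite on
   compact sets, positive on nonempty open sets (regularity is automatic for
   locally finite Borel measures on a second countable LCH space). *)
Record left_haar (R : realType) (G : ptopologicalType) (mul : G -> G -> G)
    (mu : {measure set (borel G) -> \bar R}) : Prop := LeftHaar {
  haar_left_inv : forall (g : G) (A : set (borel G)), measurable A ->
    mu [set mul g x | x in A] = mu A;
  haar_compact : forall K : set G, compact K -> (mu K < +oo)%E;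
  haar_open : forall U : set G, open U -> U !=set0 -> (0 < mu U)%E }.

Record semigroup_cond (G : ptopologicalType) (mul : G -> G -> G)
    (inv : G -> G) (e : G) (P : set G) : Prop := SemigroupCond {
  P_closed : closed P;
  P_e : P e;
  P_mul : forall a b, P a -> P b -> P (mul a b);
  P_gen : forall g, exists a b, [/\ P a, P b & g = mul a (inv b)];
  P_dense : P `<=` closure (interior P) }.

(* A continuous right action of P on X with injective maps x |-> x a.
   [act x a] stands for x a (only its values for a in P matter). *)
Record right_action (X : topologicalType) (G : ptopologicalType)
    (mul : G -> G -> G) (e : G) (P : set G) (act : X -> G -> X) : Prop :=
  RightAction {
  act_e : forall x, act x e = x;
  act_mul : forall x a b, P a -> P b -> act (act x a) b = act x (mul a b);
  act_cont : {within [set z : X * G | P z.2], continuous (fun z => act z.1 z.2)};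
  act_inj : forall a, P a -> injective (fun x => act x a) }.

Definition semidirect (X : topologicalType) (G : ptopologicalType)
    (mul : G -> G -> G) (inv : G -> G) (P : set G) (act : X -> G -> X)
    : set (X * G) :=
  [set z | exists a b y, [/\ P a, P b, z.2 = mul a (inv b) & act z.1 a = act y b]].

Definition Qset (X : topologicalType) (G : ptopologicalType)
    (mul : G -> G -> G) (inv : G -> G) (P : set G) (act : X -> G -> X)
    (x : X) : set G :=
  [set g | semidirect mul inv P act (x, g)].

Definition Cc_on (R : realType) (T : topologicalType) (S : set T)
    (phi : T -> R) : Prop :=
  {within S, continuous phi} /\
  exists K : set T, [/\ compact K, K `<=` S & forall z, S z -> ~ K z -> phi z = 0].

Definition admits_haar_system (R : realType) (X : topologicalType)
    (G : ptopologicalType) (mul : G -> G -> G) (inv : G -> G) (P : set G)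
    (act : X -> G -> X) (mu : {measure set (borel G) -> \bar R}) : Prop :=
  forall phi : X * G -> R, Cc_on (semidirect mul inv P act) phi ->
    continuous (fun x : X =>
      (\int[mu]_g (phi (x, g) * \1_(Qset mul inv P act x) g)%:E)%E).

Definition X0a (X : topologicalType) (G : ptopologicalType) (P : set G)
    (act : X -> G -> X) (a : G) : set X :=
  [set y | exists x b, interior P b /\ y = act (act x b) a].

From HB Require Import structures.
From mathcomp Require Import all_boot all_order all_algebra.
From mathcomp Require Import all_classical all_reals all_analysis.
Import Order.TTheory GRing.Theory Num.Theory.
Import numFieldNormedType.Exports.
Local Open Scope classical_set_scope.
Local Open Scope ring_scope.

(* For [g] in [P], [g^-1] lies in [Q_x] exactly when [x] lies in the range [X g]
   of the injective map [y |-> y g].  Every [g] in the support of [f_n] has the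
   form [b' a] with [b'] in [Int(P)], so the integrand of [F_n(x)] is [f_n]
   itself when [x] is in [X b' a] and [0] otherwise.  If [x] is not in [X_0 a]
   it is in no [X b' a], and [F_n(x) = 0].  If [x = z b a] with [b] in [Int(P)],
   then [x = z (b b'^-1) b' a] as soon as [b b'^-1] is in [P]; by continuity this
   holds for all [b' a] in a neighbourhood of [a], hence in [U_n] for large [n],
   and then [F_n(x) = \int f_n = 1]. *)

Section GroupLaws.
Context {G : ptopologicalType} {mul : G -> G -> G} {inv : G -> G} {e : G}.
Hypothesis grp : lcsc_group mul inv e.

Lemma mulgK (a b : G) : mul (mul b a) (inv a) = b.
Proof.
by rewrite -(grp_assoc grp) (proj2 (grp_inv grp a)) (proj2 (grp_unit grp b)).
Qed.

Lemma invg1 : inv e = e.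
Proof.
by rewrite -(proj2 (grp_unit grp (inv e))) (proj1 (grp_inv grp e)).
Qed.

Lemma continuous_mulgl (c : G) : continuous (mul c).
Proof.
move=> x; apply: (@continuous_comp _ _ _ (pair c) (fun z => mul z.1 z.2)).
  by apply: cvg_pair; [exact: cvg_cst | exact: cvg_id].
exact: grp_mul_cont grp _.
Qed.

Lemma continuous_mulgr (c : G) : continuous (mul^~ c).
Proof.
move=> x; apply: (@continuous_comp _ _ _ (pair^~ c) (fun z => mul z.1 z.2)).
  by apply: cvg_pair; [exact: cvg_id | exact: cvg_cst].
exact: grp_mul_cont grp _.
Qed.

(* The map [g |-> b (g a^-1)^-1] is continuous, sends [a] to [b] and [b' a] to [b b'^-1]. *)
Lemma nbhs_mul_inv_interior (a : G) {P : set G} {b : G} : interior P b ->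
  nbhs a [set g | P (mul b (inv (mul g (inv a))))].
Proof.
have ha : mul b (inv (mul a (inv a))) = b.
  by rewrite (proj2 (grp_inv grp a)) invg1 (proj2 (grp_unit grp b)).
move=> Pb; have := continuous_comp (continuous_comp (continuous_mulgr (inv a) a)
  (@grp_inv_cont _ _ _ _ grp _)) (continuous_mulgl b _).
by apply; rewrite /= ha.
Qed.

End GroupLaws.

Section QsetInverse.
Context {G : ptopologicalType} {mul : G -> G -> G} {inv : G -> G} {e : G}.
Context {P : set G} {X : topologicalType} {act : X -> G -> X}.
Hypotheses (grp : lcsc_group mul inv e) (ra : right_action mul e P act).
Hypothesis sg : semigroup_cond mul inv e P.

Lemma Qset_invP {g : G} (x : X) : P g ->
  Qset mul inv P act x (inv g) <-> exists y, x = act y g.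
Proof.
case: grp => mulA unit ginv _ _ _ _ _; move=> Pg; split.
- move=> [c [d [y [Pc Pd /= gcd xc]]]]; exists y.
  have dE : d = mul g c.
    have : mul g (inv g) = e := proj2 (ginv g).
    rewrite gcd mulA => /(congr1 (mul^~ d)).
    by rewrite -mulA (proj1 (ginv d)) (proj2 (unit _)) (proj1 (unit d)).
  by apply: (act_inj ra Pc); rewrite /= xc dE (act_mul ra).
- move=> [y ->]; exists e, g, y; split => //=; first exact: P_e sg.
  + by rewrite (proj1 (unit _)).
  + by rewrite (act_e ra).
Qed.

Lemma X0a_of_Qset_inv {a b' : G} {x : X} : P a -> interior P b' ->
  Qset mul inv P act x (inv (mul b' a)) -> X0a P act a x.
Proof.
move=> Pa Ib'; have Pb' := interior_subset Ib'.
have Pb'a : P (mul b' a) by exact: (P_mul sg).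
by move=> /(Qset_invP _ Pb'a) [y ->]; exists y, b'; rewrite (act_mul ra).
Qed.

Lemma Qset_inv_of_X0a {a b b' : G} (z : X) : P a -> P b' -> P (mul b (inv b')) ->
  Qset mul inv P act (act (act z b) a) (inv (mul b' a)).
Proof.
move=> Pa Pb' Pbb'; apply/Qset_invP; first exact: (P_mul sg).
exists (act z (mul b (inv b'))).
rewrite -(act_mul ra _ Pb' Pa) (act_mul ra _ Pbb' Pb') -(grp_assoc grp).
by rewrite (proj1 (grp_inv grp b')) (proj2 (grp_unit grp b)).
Qed.

End QsetInverse.

Theorem mainTheorem11 (R : realType) (G : ptopologicalType)
  (mul : G -> G -> G) (inv : G -> G) (e : G)
  (mu : {measure set (borel G) -> \bar R}) (P : set G)
  (X : topologicalType) (act : X -> G -> X) :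
  lcsc_group mul inv e -> left_haar mul mu -> semigroup_cond mul inv e P ->
  compact [set: X] -> hausdorff_space X -> right_action mul e P act ->
  admits_haar_system mul inv P act mu ->
  forall (a : G) (U : nat -> set G) (f : nat -> G -> R),
  P a ->
  (forall n, open (U n)) ->
  (forall n, U n.+1 `<=` U n) ->
  \bigcap_n U n = [set a] ->
  (forall V : set G, open V -> V a -> \forall n \near \oo, U n `<=` V) ->
  (forall n, continuous (f n) /\ compact (closure [set g | f n g != 0])) ->
  (forall n g, 0 <= f n g) ->
  (forall n, (\int[mu]_g (f n g)%:E = 1)%E) ->
  (forall n, closure [set g | f n g != 0] `<=`
               U n `&` [set mul b a | b in interior P]) ->
  forall x : X,
    (fun n => (\int[mu]_g
                (f n g * \1_(Qset mul inv P act x) (inv g))%:E)%E)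
      @ \oo --> (\1_(X0a P act a) x)%:E.
Proof.
move=> grp _ sg _ _ ra _ a U f Pa _ _ _ shrink _ _ fint fsupp x.
have supp n g : f n g != 0 -> U n g /\ exists2 b', interior P b' & g = mul b' a.
  move=> fg; have := fsupp n g (@subset_closure _ [set g | f n g != 0] g fg).
  by move=> [Ug [b' Ib' gE]]; split=> //; exists b'.
case: (pselect (X0a P act a x)) => [[z [b [Ib ->]]] | notX0a].
- rewrite indicE mem_set; last by exists z, b.
  have := shrink _ (open_interior _) (nbhs_mul_inv_interior grp a Ib).
  move=> /filterS near_U; apply: cvg_near_cst; apply: near_U => n Un.
  rewrite -(fint n); congr integral; apply/funext => g.
  have [->|fg] := eqVneq (f n g) 0; first by rewrite mul0r.
  have [Ug [b' Ib' gE]] := supp n g fg.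
  have Pbb' : P (mul b (inv b')).
    by have := interior_subset (Un g Ug); rewrite /= gE (mulgK grp).
  rewrite indicE mem_set ?mulr1 // gE.
  exact: (Qset_inv_of_X0a grp ra sg z Pa (interior_subset Ib') Pbb').
- rewrite indicE memNset //; apply: cvg_near_cst; apply: nearW => n.
  apply: integral0_eq => g _.
  have [->|fg] := eqVneq (f n g) 0; first by rewrite mul0r.
  have [_ [b' Ib' gE]] := supp n g fg.
  by rewrite indicE memNset ?mulr0 // gE => /(X0a_of_Qset_inv grp ra sg Pa Ib').
Qed.
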